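(* Let $M$ be a right $\ddot{\mathbb H}_\ell$-module. The linear map $\Psi_s: M\otimes_{\mathbb H_\ell}\mathcal V_s^{\otimes\ell}\to M\otimes_{\mathbb H_\ell}\mathcal V_{\tau s}^{\otimes\ell}$ given by $$\Psi_s(w\otimes v_{j_1}\otimes\cdots\otimes v_{j_\ell})=wX_1^{-\delta_{j_1,\kappa}}X_2^{-\delta_{j_2,\kappa}}\cdots X_\ell^{-\delta_{j_\ell,\kappa}}\otimes v_{j_1+1}\otimes\cdots\otimes v_{j_\ell+1}$$ for all $w\in M$ and all $j_1,\dots,j_\ell\in\{1,\dots,\kappa\}$ (with the convention $v_{\kappa+1}=v_1$) is well defined.
   Context: Fix integers $m,n\geqslant0$, $m\neq n$, $\kappa=m+n$; $q\in\mathbb C^\times$ not a root of unity, $\zeta\in\mathbb C^\times$, $\ell\geqslant1$. A parity sequence $s=(s_1,\dots,s_\kappa)\in\{\pm1\}^\kappa$ has exactly $m$ entries $1$; $\tau s=(s_\kappa,s_1,\dots,s_{\kappa-1})$. For a parity sequence $t$, $\mathcal V_t$ is the superspace with basis $v_1,\dots,v_\kappa$ and $|v_j|=(1-t_j)/2$; tensor products are super tensor products. The Hecke algebra $\mathbb H_\ell$ (generated by $T_i^{\pm1}$, $1\leqslant i<\ell$, with $(T_i+1)(T_i-q^2)=0$ and braid relations) acts on $\mathcal V_t^{\otimes\ell}$ by letting $T_i$ act on factors $i,i+1$ via $\mathcal T(v_a\otimes v_a)=t_aq^{1+t_a}v_a\otimes v_a$, $\mathcal T(v_a\otimes v_b)=(-1)^{|v_a||v_b|}qv_b\otimes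 v_a$ ($a<b$), $\mathcal T(v_a\otimes v_b)=(-1)^{|v_a||v_b|}qv_b\otimes v_a+(q^2-1)v_a\otimes v_b$ ($a>b$). $\ddot{\mathbb H}_\ell$ is the double affine Hecke algebra generated by $T_i^{\pm1}$ ($1\leqslant i<\ell$), $X_j^{\pm1},Y_j^{\pm1}$ ($1\leqslant j\leqslant\ell$) with relations: $T_iT_i^{-1}=T_i^{-1}T_i=1$, $(T_i+1)(T_i-q^2)=0$, $T_iT_{i+1}T_i=T_{i+1}T_iT_{i+1}$, $T_iT_j=T_jT_i$ ($|i-j|>1$); the $X_j^{\pm1}$ commute and are mutually inverse, likewise the $Y_j^{\pm1}$; $X_0Y_1=\zeta Y_1X_0$ with $X_0=X_1\cdots X_\ell$; $T_iX_iT_i=q^2X_{i+1}$, $T_i^{-1}Y_iT_i^{-1}=q^{-2}Y_{i+1}$, $X_2Y_1^{-1}X_2^{-1}Y_1=q^{-2}T_1^2$; $X_jT_i=T_iX_j$ and $Y_jT_i=T_iY_j$ for $j\neq i,i+1$. The tensor products are over $\mathbb H_\ell\subset\ddot{\mathbb H}_\ell$. *)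

(* The base field C is modelled as  R[i] = complex R  for an
   arbitrary  R : realType  (every realType is a model of the reals). *)
From HB Require Import structures.
From mathcomp Require Import all_boot all_order all_algebra.
From mathcomp Require Import complex.
From mathcomp Require Import reals.
Set Implicit Arguments. Unset Strict Implicit. Unset Printing Implicit Defensive.
Import Order.TTheory GRing.Theory Num.Theory.
Local Open Scope ring_scope.

(* A right DAHA-module is a C-vector space M with linear operators giving the
   right action of the generators:  w . T_i = T i w,  w . T_i^{-1} = Tinv i w,
   w . X_j^{±1} = X j w / Xinv j w,  w . Y_j^{±1} = Y j w / Yinv j w.
   Indices are 1-based as in the paper.  Since the action is a right action,
   a word  a1 a2 ... ak  acts on w as  ak (... (a1 w)).                      *)

Fixpoint prodX (M : Type) (X : nat -> M -> M) (k : nat) (w : M) : M :=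
  match k with 0 => w | k'.+1 => X k (prodX X k' w) end.

Definition is_right_DAHA_module (C : fieldType) (M : lmodType C) (l : nat)
  (q zeta : C) (T Tinv X Xinv Y Yinv : nat -> {linear M -> M}) : Prop :=
  let isT i := (1 <= i < l)%N in
  let isJ j := (1 <= j <= l)%N in
  [/\ [/\
      (forall i w, isT i -> Tinv i (T i w) = w /\ T i (Tinv i w) = w),
      (* (T_i + 1)(T_i - q^2) = 0 *)
      (forall i w, isT i -> T i (T i w) + (1 - q ^+ 2) *: T i w - q ^+ 2 *: w = 0),
      (forall i w, isT i -> isT i.+1 ->
          T i (T i.+1 (T i w)) = T i.+1 (T i (T i.+1 w))) &
      (forall i j w, isT i -> isT j -> (i.+1 < j)%N \/ (j.+1 < i)%N ->
          T j (T i w) = T i (T j w))],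
      [/\
      (forall j w, isJ j -> Xinv j (X j w) = w /\ X j (Xinv j w) = w),
      (forall j k w, isJ j -> isJ k ->
          [/\ X k (X j w) = X j (X k w), Xinv k (X j w) = X j (Xinv k w)
            & Xinv k (Xinv j w) = Xinv j (Xinv k w)]),
      (forall j w, isJ j -> Yinv j (Y j w) = w /\ Y j (Yinv j w) = w) &
      (forall j k w, isJ j -> isJ k ->
          [/\ Y k (Y j w) = Y j (Y k w), Yinv k (Y j w) = Y j (Yinv k w)
            & Yinv k (Yinv j w) = Yinv j (Yinv k w)])] &
      [/\ (* X_0 Y_1 = zeta Y_1 X_0,  X_0 = X_1 ... X_l *)
          (forall w, Y 1 (prodX X l w) = zeta *: prodX X l (Y 1 w)),
          (forall i w, isT i -> T i (X i (T i w)) = q ^+ 2 *: X i.+1 w),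
          (forall i w, isT i -> Tinv i (Y i (Tinv i w)) = q ^- 2 *: Y i.+1 w),
          (forall w, (2 <= l)%N ->
              Y 1 (Xinv 2 (Yinv 1 (X 2 w))) = q ^- 2 *: T 1 (T 1 w)) &
          (forall i j w, isT i -> isJ j -> j != i -> j != i.+1 ->
              [/\ T i (X j w) = X j (T i w) & T i (Y j w) = Y j (T i w)])]].

(* s : {ffun 'I_kappa -> int}, s j = s_{j+1} (0-based indices). *)
Definition parity_seq (m n : nat) (s : {ffun 'I_(m + n) -> int}) : Prop :=
  (forall j, s j = 1 \/ s j = -1) /\ #|[set j | s j == 1]| = m.

Definition tau_ps (k : nat) (s : {ffun 'I_k -> int}) : {ffun 'I_k -> int} :=
  [ffun j => s (ord_pred j)].

(* Multi-indices J = (j_1,...,j_l), 0-based: J p = j_{p+1} - 1.  The space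
   M (x)_C V_t^{(x) l} is identified with {ffun multi-index -> M}, the
   function f standing for  sum_J f J (x) v_{j_1} (x) ... (x) v_{j_l}.       *)
Definition midx (l k : nat) := {ffun 'I_l -> 'I_k}.

Definition etens (C : fieldType) (M : lmodType C) (l k : nat) (w : M)
  (J : midx l k) : {ffun midx l k -> M} :=
  [ffun K => if K == J then w else 0].

Definition swapJ (l k : nat) (p p' : 'I_l) (J : midx l k) : midx l k :=
  [ffun r => if r == p then J p' else if r == p' then J p else J r].

(* w (x) (T_{p+1} . v_J), where T_{p+1} acts on factors p+1, p+2 (1-based)
   of the super tensor product V_t^{(x) l} through the operator cal_T;
   cal_T is even, so no Koszul sign arises from the preceding factors.
   (-1)^{|v_a||v_b|} = -1 iff t_a = t_b = -1. *)
Definition w_tens_Tv (C : fieldType) (M : lmodType C) (l k : nat) (q : C)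
  (t : {ffun 'I_k -> int}) (p p' : 'I_l) (w : M) (J : midx l k)
  : {ffun midx l k -> M} :=
  let a := J p in let b := J p' in
  let sgn : C := if (t a == -1) && (t b == -1) then -1 else 1 in
  if a == b then etens ((t a)%:~R * q ^ (1 + t a) *: w) J
  else if (a < b)%N then etens ((sgn * q) *: w) (swapJ p p' J)
  else etens ((sgn * q) *: w) (swapJ p p' J) + etens ((q ^+ 2 - 1) *: w) J.

Inductive span_of (C : fieldType) (V : lmodType C) (P : V -> Prop) : V -> Prop :=
  | span0 : span_of P 0
  | span_gen v : P v -> span_of P v
  | spanD u v : span_of P u -> span_of P v -> span_of P (u + v)
  | spanZ (c : C) v : span_of P v -> span_of P (c *: v).

(* The generators  (w . T_i) (x) v_J - w (x) (T_i . v_J)  of the kernel of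
   M (x)_C V_t^{(x) l} ->> M (x)_{H_l} V_t^{(x) l}. *)
Definition hecke_rel (C : fieldType) (M : lmodType C) (l k : nat) (q : C)
  (t : {ffun 'I_k -> int}) (T : nat -> {linear M -> M})
  (f : {ffun midx l k -> M}) : Prop :=
  exists (p p' : 'I_l) (w : M) (J : midx l k),
    val p' = (val p).+1 /\
    f = etens (T (val p).+1 w) J - w_tens_Tv q t p p' w J.

Definition hecke_ker (C : fieldType) (M : lmodType C) (l k : nat) (q : C)
  (t : {ffun 'I_k -> int}) (T : nat -> {linear M -> M}) :
  {ffun midx l k -> M} -> Prop :=
  span_of (hecke_rel q t T).

Definition xfac (C : fieldType) (M : lmodType C) (l k : nat)
  (Xinv : nat -> {linear M -> M}) (J : midx l k) (w : M) : M :=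
  foldl (fun w' (r : 'I_l) => if val (J r) == k.-1 then Xinv (val r).+1 w' else w')
        w (enum 'I_l).

Definition shiftJ (l k : nat) (J : midx l k) : midx l k := [ffun r => ordS (J r)].

Definition Psi_lift (C : fieldType) (M : lmodType C) (l k : nat)
  (Xinv : nat -> {linear M -> M}) (f : {ffun midx l k -> M}) : {ffun midx l k -> M} :=
  \sum_(J : midx l k) etens (xfac Xinv J (f J)) (shiftJ J).

From HB Require Import structures.
From mathcomp Require Import all_boot all_order all_algebra zify.
From mathcomp Require Import complex reals.
Set Implicit Arguments. Unset Strict Implicit. Unset Printing Implicit Defensive.
Import Order.TTheory GRing.Theory Num.Theory.
Local Open Scope ring_scope.

(* Psi_lift is linear, so it suffices to send every generator
   (w.T_i) (x) v_J - w (x) (T_i.v_J) of the source kernel to a generator of the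
   target kernel; it is in fact sent to the generator at the same position i,
   with multi-index J + 1 and vector w' = xfac (J with j_i, j_(i+1) swapped) w.
   The factors X_r^-1 at positions r <> i, i+1 commute with T_i, so everything
   reduces to relations among T_i, X_i^-1, X_(i+1)^-1: T_i commutes with
   X_i^-1 X_(i+1)^-1, while
     X_(i+1)^-1 T_i = T_i X_i^-1 - (q^2 - 1) X_i^-1,
     T_i X_(i+1)^-1 = X_i^-1 T_i - (q^2 - 1) X_i^-1.
   These correction terms exactly compensate the change in the relative order
   of j_i and j_(i+1) when one of them wraps around from kappa to 1. *)

Section ConditionalIteration.
Variables (C : fieldType) (M : lmodType C) (I : eqType).

Definition cond_iter (F : I -> M -> M) (P : pred I) (s : seq I) (w : M) : M :=
  foldl (fun w' r => if P r then F r w' else w') w s.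

Lemma cond_iter_is_linear (F : I -> {linear M -> M}) P s : linear (cond_iter F P s).
Proof.
move=> a u v; elim: s u v => [|r s IHs] u v //=.
by rewrite -IHs; case: (P r); rewrite ?linearP.
Qed.

Lemma eq_cond_iter F (P Q : pred I) s :
  {in s, P =1 Q} -> cond_iter F P s =1 cond_iter F Q s.
Proof.
elim: s => [|r s IHs] // eqPQ w /=.
by rewrite eqPQ ?mem_head // IHs // => y ys; apply: eqPQ; rewrite in_cons ys orbT.
Qed.

Lemma cond_iter_commute F (P : pred I) s (A : M -> M) w :
  (forall r, P r -> forall u, A (F r u) = F r (A u)) ->
  cond_iter F P s (A w) = A (cond_iter F P s w).
Proof.
move=> AF; elim: s w => [|r s IHs] w //=.
by rewrite -IHs; case: ifP => // /AF ->.
Qed.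

Lemma cond_iter_extract F (P : pred I) s x w :
  uniq s -> x \in s -> (forall r u, F r (F x u) = F x (F r u)) ->
  cond_iter F P s w = cond_iter F (predD1 P x) s (if P x then F x w else w).
Proof.
move=> + + Fx; elim: s w => [|r s IHs] w //= /andP[rNs s_uniq].
rewrite in_cons => /predU1P[xr|xs].
  rewrite xr eqxx /=; apply: eq_cond_iter => y ys /=.
  by have [yr|//] := eqVneq y r; rewrite -yr ys in rNs.
have rNx : r != x by apply: contraNneq rNs => ->.
rewrite IHs //= rNx.
by congr cond_iter; case: (P r); case: (P x); rewrite ?Fx.
Qed.

End ConditionalIteration.

HB.instance Definition _ (C : fieldType) (M : lmodType C) (I : eqType)
    (F : I -> {linear M -> M}) (P : pred I) (s : seq I) :=
  GRing.isLinear.Build C M M *:%R (cond_iter F P s) (cond_iter_is_linear F P s).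

Lemma commute_inverse (T : Type) (f g g' : T -> T) :
  cancel g g' -> cancel g' g -> (forall u, f (g u) = g (f u)) ->
  forall u, f (g' u) = g' (f u).
Proof. by move=> gK g'K fg u; rewrite -[f (g' u)]gK -fg g'K. Qed.

Section HeckeLocalRelations.
Variables (C : fieldType) (M : lmodType C) (q : C).
Variables (T Xi Xj Xii Xji : {linear M -> M}).
Hypothesis q_neq0 : q != 0.
Hypothesis T_quad : forall w, T (T w) + (1 - q ^+ 2) *: T w - q ^+ 2 *: w = 0.
Hypotheses (XiK : cancel Xi Xii) (XiiK : cancel Xii Xi).
Hypotheses (XjK : cancel Xj Xji) (XjiK : cancel Xji Xj).
Hypothesis XiXj : forall w, Xi (Xj w) = Xj (Xi w).
Hypothesis TXT : forall w, T (Xi (T w)) = q ^+ 2 *: Xj w.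

Lemma hecke_quadE w : T (T w) = (q ^+ 2 - 1) *: T w + q ^+ 2 *: w.
Proof.
apply/eqP; rewrite -subr_eq0 -[X in _ == X](T_quad w) -[1 - _]opprB scaleNr.
by rewrite opprD addrA.
Qed.

Lemma hecke_T_inj : injective T.
Proof.
have q2_neq0 : q ^+ 2 != 0 by rewrite expf_neq0.
have q2E x : q ^+ 2 *: x = T (T x) - (q ^+ 2 - 1) *: T x.
  by rewrite hecke_quadE addrAC subrr add0r.
by move=> u v Tuv; apply: (scalerI q2_neq0); rewrite !q2E Tuv.
Qed.

Let Xj_TXiT w : Xj w = q ^- 2 *: T (Xi (T w)).
Proof. by rewrite TXT scalerA mulVf ?scale1r // expf_neq0. Qed.

Lemma hecke_T_Xinv_pair w : T (Xji (Xii w)) = Xji (Xii (T w)).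
Proof.
apply: (@commute_inverse _ T (fun u => Xi (Xj u)) (fun u => Xji (Xii u))) => u /=.
- by rewrite XiK XjK.
- by rewrite XjiK XiiK.
- by rewrite [RHS]XiXj !Xj_TXiT !linearZ.
Qed.

Lemma hecke_T_Xinv_next w : T (Xji w) = Xii (T w) - (q ^+ 2 - 1) *: Xii w.
Proof.
apply: (can_inj XiK); rewrite linearB linearZ /= !XiiK.
apply: hecke_T_inj; rewrite TXT XjiK linearB linearZ /= hecke_quadE.
by rewrite addrAC subrr add0r.
Qed.

Lemma hecke_Xinv_next_T w : Xji (T w) = T (Xii w) - (q ^+ 2 - 1) *: Xii w.
Proof.
apply: (can_inj XjK); rewrite XjiK Xj_TXiT linearB linearZ /= hecke_quadE.
rewrite addrAC subrr add0r !linearZ /= XiiK scalerA divff ?scale1r //.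
by rewrite expf_neq0.
Qed.

End HeckeLocalRelations.

Definition is_last (k : nat) (x : 'I_k) : bool := val x == k.-1.

Section IndexShift.
Variables (l k : nat).

Lemma ordS_val (x : 'I_k) : val (ordS x) = if is_last x then 0%N else (val x).+1.
Proof.
rewrite /is_last /=; have := ltn_ord x.
case: eqP => [-> k_gt0 | ? ?]; first by rewrite prednK ?modnn //; lia.
by rewrite modn_small //; lia.
Qed.

Lemma ltn_ordS (x y : 'I_k) :
  (ordS x < ordS y)%N = if is_last y then false else if is_last x then true else (x < y)%N.
Proof. by rewrite !ordS_val; case: (is_last y); case: (is_last x). Qed.

Lemma ltn_last (x y : 'I_k) : is_last y -> (x < y)%N = ~~ is_last x.
Proof. by rewrite /is_last /= => /eqP ->; have := ltn_ord x; lia. Qed.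

Lemma last_ltn (x y : 'I_k) : is_last x -> (x < y)%N = false.
Proof. by rewrite /is_last /= => /eqP ->; have := ltn_ord y; lia. Qed.

Lemma tau_ps_ordS (s : {ffun 'I_k -> int}) x : tau_ps s (ordS x) = s x.
Proof. by rewrite ffunE ordSK. Qed.

Lemma shiftJE (J : midx l k) r : shiftJ J r = ordS (J r).
Proof. by rewrite ffunE. Qed.

Lemma shiftJ_swapJ (p p' : 'I_l) (J : midx l k) :
  shiftJ (swapJ p p' J) = swapJ p p' (shiftJ J).
Proof. by apply/ffunP => r; rewrite !ffunE; case: ifP => //; case: ifP. Qed.

Lemma swapJ_fst (p p' : 'I_l) (J : midx l k) : swapJ p p' J p = J p'.
Proof. by rewrite ffunE eqxx. Qed.

Lemma swapJ_snd (p p' : 'I_l) (J : midx l k) : p != p' -> swapJ p p' J p' = J p.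
Proof. by move=> pp'; rewrite ffunE eq_sym (negPf pp') eqxx. Qed.

Lemma swapJ_id (p p' : 'I_l) (J : midx l k) : J p = J p' -> swapJ p p' J = J.
Proof. by move=> Jpp'; apply/ffunP => r; rewrite ffunE; do 2![case: eqP => [->|_] //]. Qed.

End IndexShift.

Section ElementaryTensors.
Variables (C : fieldType) (M : lmodType C) (l k : nat).
Implicit Types (u v : M) (J : midx l k) (f g : {ffun midx l k -> M}).

Lemma etens0 J : etens (0 : M) J = 0.
Proof. by apply/ffunP => K; rewrite !ffunE; case: ifP. Qed.

Lemma etensD u v J : etens (u + v) J = etens u J + etens v J.
Proof. by apply/ffunP => K; rewrite !ffunE; case: ifP; rewrite ?addr0. Qed.

Lemma etensB u v J : etens (u - v) J = etens u J - etens v J.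
Proof. by apply/ffunP => K; rewrite !ffunE; case: ifP; rewrite ?subr0. Qed.

Lemma etensZ (a : C) u J : etens (a *: u) J = a *: etens u J.
Proof. by apply/ffunP => K; rewrite !ffunE; case: ifP; rewrite ?scaler0. Qed.

Variable Xinv : nat -> {linear M -> M}.

Lemma xfacE J : xfac Xinv J =1
  cond_iter (fun r : 'I_l => Xinv (val r).+1) [pred r | is_last (J r)] (enum 'I_l).
Proof. by []. Qed.

HB.instance Definition _ J := GRing.isLinear.Build C M M *:%R (xfac Xinv J)
  (cond_iter_is_linear (fun r : 'I_l => Xinv (val r).+1) [pred r | is_last (J r)]
    (enum 'I_l)).

Lemma xfacZ (a : C) u J : xfac Xinv J (a *: u) = a *: xfac Xinv J u.
Proof. exact: linearZ. Qed.

Lemma Psi_lift_is_linear : linear (@Psi_lift C M l k Xinv).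
Proof.
move=> a f g; rewrite /Psi_lift scaler_sumr -big_split; apply: eq_bigr => J _ /=.
by rewrite !ffunE linearP etensD etensZ.
Qed.

HB.instance Definition _ :=
  GRing.isLinear.Build C {ffun midx l k -> M} {ffun midx l k -> M} *:%R
    (@Psi_lift C M l k Xinv) Psi_lift_is_linear.

Lemma Psi_liftD f g : Psi_lift Xinv (f + g) = Psi_lift Xinv f + Psi_lift Xinv g.
Proof. exact: raddfD. Qed.

Lemma Psi_liftB f g : Psi_lift Xinv (f - g) = Psi_lift Xinv f - Psi_lift Xinv g.
Proof. exact: raddfB. Qed.

Lemma Psi_lift_etens u J : Psi_lift Xinv (etens u J) = etens (xfac Xinv J u) (shiftJ J).
Proof.
rewrite /Psi_lift (bigD1 J) //= big1 ?addr0 => [|K /negPf KJ]; first by rewrite ffunE eqxx.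
by rewrite ffunE KJ raddf0 etens0.
Qed.

End ElementaryTensors.

Lemma span_of_linear_map (C : fieldType) (V W : lmodType C) (F : {linear V -> W})
    (P : V -> Prop) (Q : W -> Prop) :
  (forall v, P v -> span_of Q (F v)) -> forall v, span_of P v -> span_of Q (F v).
Proof.
move=> PQ v; elim=> [|u /PQ //|u w _ IHu _ IHw|a u _ IHu].
- by rewrite raddf0; apply: span0.
- by rewrite raddfD; apply: spanD.
- by rewrite linearZ; apply: spanZ.
Qed.

Section HeckeGenerator.
Variables (C : fieldType) (M : lmodType C) (l k : nat) (q : C).
Variables (T X Xinv : nat -> {linear M -> M}) (p p' : 'I_l).
Implicit Types (K : midx l k) (u w : M).
Local Notation i := (val p).+1.
Hypothesis p'E : val p' = i.
Hypothesis q_neq0 : q != 0.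
Hypothesis T_quad : forall w, T i (T i w) + (1 - q ^+ 2) *: T i w - q ^+ 2 *: w = 0.
Hypothesis TXT : forall w, T i (X i (T i w)) = q ^+ 2 *: X i.+1 w.
Hypothesis XK : forall j, (1 <= j <= l)%N -> cancel (X j) (Xinv j).
Hypothesis XinvK : forall j, (1 <= j <= l)%N -> cancel (Xinv j) (X j).
Hypothesis X_comm : forall j j' w, (1 <= j <= l)%N -> (1 <= j' <= l)%N ->
  X j (X j' w) = X j' (X j w).
Hypothesis Xinv_comm : forall j j' w, (1 <= j <= l)%N -> (1 <= j' <= l)%N ->
  Xinv j (Xinv j' w) = Xinv j' (Xinv j w).
Hypothesis TX_comm : forall j w, (1 <= j <= l)%N -> j != i -> j != i.+1 ->
  T i (X j w) = X j (T i w).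

Let pos_range (r : 'I_l) : (1 <= (val r).+1 <= l)%N := ltn_ord r.
Let i_range : (1 <= i <= l)%N := pos_range p.
Let i1_range : (1 <= i.+1 <= l)%N. Proof. by rewrite -p'E pos_range. Qed.
Let p_neq_p' : p != p'. Proof. by apply/eqP => pp'; move: p'E; rewrite pp'; lia. Qed.

Let Xrest K : {linear M -> M} := cond_iter (fun r : 'I_l => Xinv (val r).+1)
  (predD1 (predD1 [pred r | is_last (K r)] p) p') (enum 'I_l).
Let Xinv_if (b : bool) j u := if b then Xinv j u else u.

Lemma xfac_split K u :
  xfac Xinv K u = Xrest K (Xinv_if (is_last (K p')) i.+1 (Xinv_if (is_last (K p)) i u)).
Proof.
have Xinv_pos_comm (x r : 'I_l) w :
    Xinv (val r).+1 (Xinv (val x).+1 w) = Xinv (val x).+1 (Xinv (val r).+1 w).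
  by apply: Xinv_comm; apply: pos_range.
rewrite xfacE (cond_iter_extract _ _ (enum_uniq _) (mem_enum _ p) (Xinv_pos_comm p)).
rewrite (cond_iter_extract _ _ (enum_uniq _) (mem_enum _ p') (Xinv_pos_comm p')).
by rewrite /= eq_sym p_neq_p' -p'E.
Qed.

Lemma Xrest_swapJ K : Xrest (swapJ p p' K) =1 Xrest K.
Proof.
apply: eq_cond_iter => r _ /=; rewrite ffunE.
by case: eqP => [->|_]; rewrite ?eqxx ?andbF //; case: eqP => [->|_]; rewrite ?eqxx ?andbF.
Qed.

Lemma Xrest_T K u : Xrest K (T i u) = T i (Xrest K u).
Proof.
apply: cond_iter_commute => r /= /andP[r_p' /andP[r_p _]] w.
apply: (commute_inverse (XK (pos_range r)) (XinvK (pos_range r))) => v.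
by apply: TX_comm; rewrite ?pos_range // eqSS -?p'E.
Qed.

Let XiK := XK i_range.
Let XiiK := XinvK i_range.
Let XjK := XK i1_range.
Let XjiK := XinvK i1_range.
Let XiXj w : X i (X i.+1 w) = X i.+1 (X i w) := @X_comm i i.+1 w i_range i1_range.

Lemma xfac_T_same K u : is_last (K p) = is_last (K p') ->
  xfac Xinv K (T i u) = T i (xfac Xinv K u).
Proof.
move=> same; rewrite !xfac_split -same /Xinv_if -Xrest_T.
case: is_last => //; congr (Xrest K _).
by rewrite (hecke_T_Xinv_pair q_neq0 XiK XiiK XjK XjiK XiXj TXT).
Qed.

Lemma xfac_swapJ K : ~~ is_last (K p) -> ~~ is_last (K p') ->
  xfac Xinv (swapJ p p' K) =1 xfac Xinv K.
Proof.
move=> /negPf Kp /negPf Kp' u.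
by rewrite !xfac_split Xrest_swapJ swapJ_fst swapJ_snd // Kp Kp'.
Qed.

Lemma xfac_T_last_first K u : is_last (K p) -> ~~ is_last (K p') ->
  xfac Xinv K (T i u) = T i (xfac Xinv (swapJ p p' K) u) + (q ^+ 2 - 1) *: xfac Xinv K u.
Proof.
move=> Kp /negPf Kp'; rewrite !xfac_split Xrest_swapJ swapJ_fst swapJ_snd // Kp Kp' /Xinv_if.
rewrite -Xrest_T (hecke_T_Xinv_next q_neq0 T_quad XiK XiiK XjiK TXT).
by rewrite linearB linearZ subrK.
Qed.

Lemma xfac_T_last_second K u : ~~ is_last (K p) -> is_last (K p') ->
  xfac Xinv K (T i u) =
    T i (xfac Xinv (swapJ p p' K) u) - (q ^+ 2 - 1) *: xfac Xinv (swapJ p p' K) u.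
Proof.
move=> /negPf Kp Kp'; rewrite !xfac_split Xrest_swapJ swapJ_fst swapJ_snd // Kp Kp' /Xinv_if.
rewrite (hecke_Xinv_next_T q_neq0 T_quad XiiK XjK XjiK TXT).
by rewrite linearB linearZ Xrest_T.
Qed.

Lemma Psi_lift_hecke_rel (s : {ffun 'I_k -> int}) w J :
  hecke_rel q (tau_ps s) T (Psi_lift Xinv (etens (T i w) J - w_tens_Tv q s p p' w J)).
Proof.
exists p, p', (xfac Xinv (swapJ p p' J) w), (shiftJ J); split=> //.
rewrite Psi_liftB Psi_lift_etens /w_tens_Tv !shiftJE !tau_ps_ordS (inj_eq (@ordS_inj _)).
have [Jpp'|Jpp'] := eqVneq (J p) (J p').
  by rewrite swapJ_id // Psi_lift_etens xfacZ xfac_T_same // Jpp'.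
rewrite ltn_ordS; case Ea: (is_last (J p)); case Eb: (is_last (J p')).
- by case/eqP: Jpp'; apply: val_inj; rewrite (eqP Ea) (eqP Eb).
- rewrite last_ltn // Psi_liftD !Psi_lift_etens !xfacZ shiftJ_swapJ.
  by rewrite xfac_T_last_first ?Eb // etensD opprD addrACA subrr addr0.
- rewrite ltn_last ?Ea // !Psi_lift_etens !xfacZ shiftJ_swapJ.
  by rewrite xfac_T_last_second ?Ea // etensB opprD addrA [LHS]addrAC.
- case: ltnP => _; rewrite ?Psi_liftD !Psi_lift_etens !xfacZ shiftJ_swapJ.
  all: by rewrite !xfac_swapJ ?Ea ?Eb // xfac_T_same ?Ea ?Eb.
Qed.

End HeckeGenerator.

Unset Implicit Arguments.

Theorem lemma4p2 (R : realType) (m n l : nat) (q zeta : R[i])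
  (M : lmodType R[i]) (T Tinv X Xinv Y Yinv : nat -> {linear M -> M})
  (s : {ffun 'I_(m + n) -> int}) :
  m != n -> (1 <= l)%N ->
  q != 0 -> (forall k : nat, (0 < k)%N -> q ^+ k != 1) -> zeta != 0 ->
  parity_seq s ->
  is_right_DAHA_module l q zeta T Tinv X Xinv Y Yinv ->
  forall f : {ffun midx l (m + n) -> M},
    hecke_ker q s T f -> hecke_ker q (tau_ps s) T (Psi_lift Xinv f).
Proof.
move=> _ _ q_neq0 _ _ _ [[_ T_quad _ _] [XK X_comm _ _] [_ TXT _ _ TX_comm]] f.
apply: span_of_linear_map => _ [p [p' [w [J [p'E ->]]]]]; apply: span_gen.
have p_range : (1 <= (val p).+1 < l)%N by have := ltn_ord p'; move: p'E => /= ->.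
apply: (Psi_lift_hecke_rel p'E q_neq0)
  => [u|u|j hj u|j hj u|j j' u hj hj'|j j' u hj hj'|j u hj ne1 ne2].
- exact: T_quad.
- exact: TXT.
- exact: (XK j u hj).1.
- exact: (XK j u hj).2.
- by case: (X_comm j' j u hj' hj).
- by case: (X_comm j' j u hj' hj).
- by case: (TX_comm _ j u p_range hj ne1 ne2).
Qed.
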